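(* For all integers $u,v\ge1$, with $u!=(u,u-1,\ldots,2,1)$ ($0!=\emptyset$) and all universal characters evaluated at $(x,y)$, $$S_{[(u+1)!,(v+1)!]}S_{[(u-1)!,(v-1)!]}-S_{[(u+1)!,(v-1)!]}S_{[(u-1)!,(v+1)!]}+S_{[u!,v!]}^2=0,$$ $$S_{[(u+1)!,(v-1)!]}S_{[(u-1)!,(v+1)!]}-S_{[u!,(v+2,v-1,\ldots,1)]}S_{[(u+2,u-1,\ldots,1),v!]}+S_{[(u+2,u-1,\ldots,1),(v+2,v-1,\ldots,1)]}S_{[u!,v!]}=0.$$
   Context: For $x=(x_1,x_2,\dots)$ define $p_k(x)$ by $\sum_{k\ge0}p_k(x)z^k=\exp(\sum_{k\ge1}x_kz^k)$ and $p_{-k}=0$ for $k>0$; $q_k(y)$ is the same with $y=(y_1,y_2,\dots)$ in place of $x$. For partitions $\lambda=(\lambda_1,\dots,\lambda_l)$, $\mu=(\mu_1,\dots,\mu_{l'})$, the universal character is $S_{[\lambda,\mu]}(x,y)=\det(a_{ij})_{1\le i,j\le l+l'}$ with $a_{ij}=q_{\mu_{l'-i+1}+i-j}(y)$ for $1\le i\le l'$ and $a_{ij}=p_{\lambda_{i-l'}-i+j}(x)$ for $l'+1\le i\le l+l'$. *)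

From HB Require Import structures.
From mathcomp Require Import all_boot all_order all_algebra.
Set Implicit Arguments. Unset Strict Implicit. Unset Printing Implicit Defensive.
Import Order.TTheory GRing.Theory Num.Theory.
Local Open Scope ring_scope.

(* p_k(x) = coefficient of z^k in exp(sum_{k>=1} x_k z^k).  Only x_1..x_k
   contribute to this coefficient, so we truncate the inner series at
   degree k and the exponential series at n = k (higher powers of a series
   without constant term have no z^k coefficient). x 0 is unused. *)
Definition schur_p (R : fieldType) (x : nat -> R) (k : nat) : R :=
  let f : {poly R} := \sum_(1 <= i < k.+1) x i *: 'X^i in
  \sum_(0 <= n < k.+1) (n`!%:R)^-1 * (f ^+ n)`_k.

Definition schur_pz (R : fieldType) (x : nat -> R) (k : int) : R :=
  match k with
  | Posz n => schur_p x n
  | Negz _ => 0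
  end.

(* Universal character S_[lam, mu](x, y), partitions given as
   weakly decreasing seq nat (lam = (lam_1,...,lam_l)).  The matrix is
   written with 0-based indices i, j < l + l'. *)
Definition univ_char (R : fieldType) (lam mu : seq nat) (x y : nat -> R) : R :=
  let l' := size mu in
  \det (\matrix_(i < size lam + l', j < size lam + l')
    if (i < l')%N then
      schur_pz y ((nth 0%N mu (l' - 1 - i))%:Z + (i%:Z) - (j%:Z))
    else
      schur_pz x ((nth 0%N lam (i - l'))%:Z - (i%:Z) + (j%:Z))).

Definition stair (u : nat) : seq nat := rev (iota 1 u).

Definition stair2 (u : nat) : seq nat := u.+2 :: stair u.-1.

(* Both identities are determinant identities, valid for any sequences
   (p_k), (q_k) with p_0 = q_0 = 1 and p_k = q_k = 0 for k < 0.  The matrix of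
   S_[lam, mu] has rows c |-> q_(a - c) and c |-> p_(b + c) on the columns
   0, 1, 2, ...; for staircases the offsets are 1, 3, ..., 2v - 1 and
   u - v, u - v - 2, ..., and deleting the first or the last column of a
   staircase matrix leaves a row that is a unit vector, whose removal gives
   again a staircase matrix.  The first identity is therefore the
   Desnanot-Jacobi identity for the last q-row and the first p-row against
   the first and the last column.  The second one is the three-term Plücker
   relation for the rows q_(2v-1), q_(2v+1), p_(u-v+2), p_(u-v) on top of
   common rows. *)

From HB Require Import structures.
From mathcomp Require Import all_boot all_order all_algebra.
From mathcomp Require Import ring zify.
Set Implicit Arguments. Unset Strict Implicit. Unset Printing Implicit Defensive.
Import Order.TTheory GRing.Theory Num.Theory.
Local Open Scope ring_scope.

Lemma det_mx22 (R : comNzRingType) (A : 'M[R]_2) : \det A = A 0 0 * A 1 1 - A 0 1 * A 1 0.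
Proof.
rewrite (expand_det_row _ 0) !big_ord_recl big_ord0 /cofactor !det_mx11 !mxE /=.
have -> : lift 0 0 = 1 :> 'I_2 by apply: val_inj.
have -> : lift 1 0 = 0 :> 'I_2 by apply: val_inj.
by rewrite addr0 expr0 expr1 mul1r mulN1r mulrN.
Qed.

Lemma det_adj_ulsubmx_mul (R : comNzRingType) n (A : 'M[R]_(2 + n)) :
  \det A * \det (ulsubmx (\adj A)) = \det A ^+ 2 * \det (drsubmx A).
Proof.
have AadjE := mul_mx_adj A.
rewrite -{1}[A]submxK -[\adj A]submxK mulmx_block (scalar_mx_block 2 n) in AadjE.
case/eq_block_mx: AadjE => AadjL _ AadjDL _.
have AB : A *m block_mx (ulsubmx (\adj A)) 0 (dlsubmx (\adj A)) 1%:M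
    = block_mx (\det A)%:M (ursubmx A) 0 (drsubmx A).
  by rewrite -{1}[A]submxK mulmx_block AadjL AadjDL !mulmx0 !mulmx1 !add0r.
have := congr1 determinant AB.
by rewrite det_mulmx det_lblock det1 mulr1 det_ublock det_scalar.
Qed.

Lemma det_adj_ulsubmx (R : comNzRingType) n (A : 'M[R]_(2 + n)) :
  \det (ulsubmx (\adj A)) = \det A * \det (drsubmx A).
Proof.
(* The identity is polynomial in the entries of [A]; for the generic matrix
   ['X + A] the determinant is monic, hence cancellable. *)
pose P := char_poly_mx (- A).
have evalP : map_mx (horner_eval 0) P = A.
  apply/matrixP => i j; rewrite !mxE /horner_eval.
  by rewrite hornerD hornerN hornerC hornerMn hornerX mul0rn sub0r opprK.
have := det_adj_ulsubmx_mul P; rewrite expr2 -mulrA.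
move/(monic_lreg (char_poly_monic (- A))) => adjP.
by rewrite -evalP -map_mx_adj -map_ulsubmx -map_drsubmx !det_map_mx adjP rmorphM.
Qed.

Lemma desnanot_jacobi (R : comNzRingType) n (A : 'M[R]_n.+2) :
  \det A * \det (drsubmx (A : 'M_(2 + n)))
  = \det (row' 0 (col' 0 A)) * \det (row' 1 (col' 1 A))
    - \det (row' 0 (col' 1 A)) * \det (row' 1 (col' 0 A)).
Proof.
rewrite -det_adj_ulsubmx det_mx22 !mxE /cofactor.
have -> : lshift n (0 : 'I_2) = 0 :> 'I_n.+2 by apply: val_inj.
have -> : lshift n (1 : 'I_2) = 1 :> 'I_n.+2 by apply: val_inj.
rewrite /= modn_small // !exprD expr1 expr0; ring.
Qed.

Lemma det_move_row0 (R : comNzRingType) n (A B : 'M[R]_n.+1) (i : 'I_n.+1) :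
  (forall j, B 0 j = A i j) -> (forall k j, B (lift 0 k) j = A (lift i k) j) ->
  \det A = (-1) ^+ i * \det B.
Proof.
move=> B0 Blift.
rewrite (expand_det_row A i) (expand_det_row B 0) big_distrr; apply: eq_bigr => j _.
rewrite /cofactor; have -> : row' 0 (col' j B) = row' i (col' j A).
  by apply/matrixP => k l; rewrite !mxE Blift.
by rewrite B0 /= add0n exprD -mulrA mulrCA.
Qed.

Lemma det_move_col0 (R : comNzRingType) n (A B : 'M[R]_n.+1) (j : 'I_n.+1) :
  (forall i, B i 0 = A i j) -> (forall i k, B i (lift 0 k) = A i (lift j k)) ->
  \det A = (-1) ^+ j * \det B.
Proof.
move=> B0 Blift; rewrite -det_tr -[\det B]det_tr.
by apply: det_move_row0 => *; rewrite !mxE.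
Qed.

Lemma nth_cat_bump (T : Type) (x0 y : T) (F G : seq T) k :
  nth x0 (F ++ y :: G) (bump (size F) k) = nth x0 (F ++ G) k.
Proof.
rewrite /bump; case: leqP => [leFk | ltkF]; last by rewrite add0n !nth_cat ltkF.
by rewrite add1n !nth_cat ltnNge (leqW leFk) ltnNge leFk /= subSn.
Qed.

Lemma iota_rcons m n : iota m n.+1 = rcons (iota m n) (m + n)%N.
Proof. by rewrite -addn1 iotaD cats1. Qed.

Section Minors.
Variable R : comNzRingType.
Implicit Types (f g : nat -> R) (rs F G : seq (nat -> R)) (cs : seq nat).

Local Notation nth0 := (nth (fun=> 0)).

(* Minor of the infinite matrix [(f c)] with rows [rs] and columns [cs];
   missing rows are read as zero. *)
Definition minor rs cs : R :=
  \det (\matrix_(i < size cs, j < size cs) nth0 rs i (nth 0%N cs j)).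

Lemma minorE rs cs m (E : 'I_m -> 'I_m -> R) : size cs = m ->
  (forall i j : 'I_m, nth0 rs i (nth 0%N cs j) = E i j) ->
  minor rs cs = \det (\matrix_(i, j) E i j).
Proof.
move=> szcs; case: m / szcs E => E rsE.
by rewrite /minor; congr (\det _); apply/matrixP => i j; rewrite !mxE rsE.
Qed.

Lemma minor_move_row F f G cs : size cs = (size F + size G).+1 ->
  minor (F ++ f :: G) cs = (-1) ^+ size F * minor (f :: F ++ G) cs.
Proof.
case: cs => [//|c cs] /= [szcs].
have ltF : (size F < (size cs).+1)%N by lia.
apply: (det_move_row0 (i := Ordinal ltF)) => [j | k j]; rewrite !mxE /=.
  by rewrite nth_cat ltnn subnn.
by rewrite nth_cat_bump.
Qed.

Lemma minor_move_col rs (C : seq nat) c D :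
  minor rs (C ++ c :: D) = (-1) ^+ size C * minor rs (c :: C ++ D).
Proof.
pose n := (size C + size D)%N; have ltC : (size C < n.+1)%N by rewrite /n; lia.
have minor_n cs : size cs = n.+1 ->
    minor rs cs = \det (\matrix_(i < n.+1, j < n.+1) nth0 rs i (nth 0%N cs j)).
  by move=> szcs; apply: minorE.
rewrite !minor_n /= ?size_cat /= ?addnS //.
apply: (det_move_col0 (j := Ordinal ltC)) => [i | i k]; rewrite !mxE /=.
  by rewrite nth_cat ltnn subnn.
by rewrite nth_cat_bump.
Qed.

Lemma minor_cons_unit_row f rs c cs : (forall c', c' \in cs -> f c' = 0) ->
  minor (f :: rs) (c :: cs) = f c * minor rs cs.
Proof.
move=> f0; rewrite /minor (expand_det_row _ 0) big_ord_recl big1 ?addr0.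
- rewrite !mxE /cofactor /= expr0 mul1r; congr (_ * \det _).
  by apply/matrixP => i j; rewrite !mxE.
- by move=> j _; rewrite !mxE lift0 /= f0 ?mul0r // mem_nth.
Qed.

Lemma minor_cons_unit_col f rs c cs :
  (forall i, (i < size cs)%N -> nth0 rs i c = 0) ->
  minor (f :: rs) (c :: cs) = f c * minor rs cs.
Proof.
move=> rs0; rewrite /minor (expand_det_col _ 0) big_ord_recl big1 ?addr0.
- rewrite !mxE /cofactor /= expr0 mul1r; congr (_ * \det _).
  by apply/matrixP => i j; rewrite !mxE.
- by move=> i _; rewrite !mxE lift0 /= rs0 ?mul0r.
Qed.

Lemma minor_unit_col_at F f G c cs : size cs = (size F + size G)%N ->
  all (fun g => g c == 0) (F ++ G) ->
  minor (F ++ f :: G) (c :: cs) = (-1) ^+ size F * (f c * minor (F ++ G) cs).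
Proof.
move=> szcs /(all_nthP (fun=> 0)) FG0.
rewrite minor_move_row /= ?szcs // minor_cons_unit_col // => i lti.
by apply/eqP/FG0; rewrite size_cat -szcs.
Qed.

Lemma nth_lift1 (T : Type) (x0 a b : T) s n (i : 'I_n.+1) :
  nth x0 (a :: b :: s) (lift (1 : 'I_n.+2) i) = nth x0 (a :: s) i.
Proof. by rewrite /= /bump modn_small //; case: i => [[|k] ?]. Qed.

Lemma minor_jacobi f1 f2 rs c1 c2 cs :
  minor (f1 :: f2 :: rs) (c1 :: c2 :: cs) * minor rs cs
  = minor (f2 :: rs) (c2 :: cs) * minor (f1 :: rs) (c1 :: cs)
    - minor (f2 :: rs) (c1 :: cs) * minor (f1 :: rs) (c2 :: cs).
Proof.
pose A := \matrix_(i < (size cs).+2, j < (size cs).+2)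
  nth0 (f1 :: f2 :: rs) i (nth 0%N (c1 :: c2 :: cs) j).
apply: etrans (etrans _ (desnanot_jacobi A)) _.
- by congr (_ * \det _); apply/matrixP => i j; rewrite !mxE.
- by congr (_ * _ - _ * _); congr (\det _); apply/matrixP => i j;
    rewrite /A !mxE ?lift0 ?nth_lift1.
Qed.

Lemma minor_move_rows2 F f1 f2 G cs : size cs = (size F + size G).+2 ->
  minor (F ++ f1 :: f2 :: G) cs = minor (f1 :: f2 :: F ++ G) cs.
Proof.
move=> szcs; rewrite -cat_rcons minor_move_row ?size_rcons; last by lia.
rewrite cat_rcons -cat_cons minor_move_row /=; last by lia.
by rewrite signrMK.
Qed.

Lemma minor_rcons_col rs cs c :
  minor rs (rcons cs c) = (-1) ^+ size cs * minor rs (c :: cs).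
Proof. by rewrite -cats1 minor_move_col cats0. Qed.

Lemma minor_rcons_unit_row rs f cs c : size rs = size cs ->
  (forall c', c' \in cs -> f c' = 0) ->
  minor (rcons rs f) (rcons cs c) = f c * minor rs cs.
Proof.
move=> szrs f0; rewrite minor_rcons_col -cats1 minor_move_row /= ?szrs ?addn0 //.
by rewrite cats0 minor_cons_unit_row // signrMK.
Qed.

Lemma minor_jacobi_split F f1 f2 G c1 c2 cs : size cs = (size F + size G)%N ->
  minor (F ++ f1 :: f2 :: G) (c1 :: rcons cs c2) * minor (F ++ G) cs
  = minor (F ++ f2 :: G) (rcons cs c2) * minor (F ++ f1 :: G) (c1 :: cs)
    - minor (F ++ f2 :: G) (c1 :: cs) * minor (F ++ f1 :: G) (rcons cs c2).
Proof.
move=> szcs.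
rewrite minor_move_rows2 /= ?size_rcons ?szcs //.
rewrite !(minor_move_row (F := F)) /= ?size_rcons ?szcs ?addn1 //.
rewrite -rcons_cons !minor_rcons_col /= exprS -[LHS]mulrA minor_jacobi.
rewrite -[LHS]mul1r -{1}(sqrr_sign _ (size F)).
move: ((-1) ^+ size F) ((-1) ^+ size cs) => sF scs; ring.
Qed.

Definition adjoin2 (e0 e1 : R) f : nat -> R :=
  fun c => match c with 0 => e0 | 1 => e1 | c'.+2 => f c' end.

Lemma minor_shift2 rs' rs cs : (forall i c, nth0 rs' i c.+2 = nth0 rs i c) ->
  minor rs' (map (addn 2) cs) = minor rs cs.
Proof.
move=> rs'E; apply: minorE => [|i j]; first by rewrite size_map.
by rewrite (nth_map 0%N) // rs'E.
Qed.

Lemma minor_pluecker f1 f2 f3 f4 rs cs : size cs = (size rs).+2 ->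
  minor (f1 :: f2 :: rs) cs * minor (f3 :: f4 :: rs) cs
  - minor (f1 :: f3 :: rs) cs * minor (f2 :: f4 :: rs) cs
  + minor (f1 :: f4 :: rs) cs * minor (f2 :: f3 :: rs) cs = 0.
Proof.
move=> szcs.
(* Jacobi for the matrix bordered on the left by two columns that vanish
   except for a unit entry in the rows of [f3] and [f4]. *)
pose e := adjoin2 0 0; pose g3 := adjoin2 1 0 f3; pose g4 := adjoin2 0 1 f4.
pose rs' := map e rs; pose cs' := map (addn 2) cs.
have rs'0 c : (c < 2)%N -> all (fun g => g c == 0) rs'.
  by case: c => [|[|//]] _; rewrite all_map; elim: (rs) => //= f fs ->; rewrite eqxx.
have szcs' : size cs' = (size rs').+2 by rewrite !size_map.
have shift2 a b a' b' f f' :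
    minor [:: adjoin2 a b f, adjoin2 a' b' f' & rs'] cs' = minor [:: f, f' & rs] cs.
  apply: minor_shift2 => -[|[|i]] c //=.
  by rewrite /rs'; elim: (rs) i => [|g gs IH] [|i] /=.
have J := minor_jacobi (e f1) (e f2) (g3 :: g4 :: rs') 0 1 cs'.
rewrite (minor_unit_col_at (F := [:: e f1; e f2]) g3 (G := g4 :: rs') (c := 0))
  /= ?szcs' ?eqxx ?rs'0 // in J.
rewrite (minor_unit_col_at (F := [:: e f1; e f2]) g4 (G := rs') (c := 1))
  /= ?szcs' ?eqxx ?rs'0 // in J.
rewrite (minor_unit_col_at (F := [:: e f2; g3]) g4 (G := rs') (c := 1))
  /= ?szcs' ?eqxx ?rs'0 // in J.
rewrite (minor_unit_col_at (F := [:: e f1]) g3 (G := g4 :: rs') (c := 0))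
  /= ?szcs' ?eqxx ?rs'0 // in J.
rewrite (minor_unit_col_at (F := [:: e f2]) g3 (G := g4 :: rs') (c := 0))
  /= ?szcs' ?eqxx ?rs'0 // in J.
rewrite (minor_unit_col_at (F := [:: e f1; g3]) g4 (G := rs') (c := 1))
  /= ?szcs' ?eqxx ?rs'0 // in J.
rewrite !shift2 in J.
by ring: J.
Qed.

Definition cminor k rs := minor rs (iota k (size rs)).

Lemma cminor_eq k k' rs rs' : size rs = size rs' ->
  (forall i c, (i < size rs)%N -> (c < size rs)%N ->
     nth0 rs i (k + c)%N = nth0 rs' i (k' + c)%N) ->
  cminor k rs = cminor k' rs'.
Proof.
move=> szrs rsE; rewrite /cminor -szrs.
have minor_iota l rs'' : minor rs'' (iota l (size rs))
    = \det (\matrix_(i < size rs, j < size rs) nth0 rs'' i (l + j)%N).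
  by apply: minorE => [|i j]; rewrite ?size_iota ?nth_iota.
by rewrite !minor_iota; congr (\det _); apply/matrixP => i j; rewrite !mxE rsE.
Qed.

Lemma cminor_cons_unit k f rs : (forall c, (k < c)%N -> f c = 0) ->
  cminor k (f :: rs) = f k * cminor k.+1 rs.
Proof.
by move=> f0; rewrite /cminor minor_cons_unit_row // => c; rewrite mem_iota => /andP[/f0].
Qed.

Lemma cminor_rcons_unit k rs f : (forall c, (c < k + size rs)%N -> f c = 0) ->
  cminor k (rcons rs f) = f (k + size rs)%N * cminor k rs.
Proof.
move=> f0; rewrite /cminor size_rcons iota_rcons minor_rcons_unit_row ?size_iota // => c.
by rewrite mem_iota => /andP[_ /f0].
Qed.

Lemma cminor_move_rows2 k F f1 f2 G :
  cminor k (F ++ f1 :: f2 :: G) = cminor k (f1 :: f2 :: F ++ G).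
Proof.
rewrite /cminor minor_move_rows2; last by rewrite size_iota size_cat /=; lia.
by rewrite size_cat !addnS -size_cat.
Qed.

Lemma cminor_jacobi k F f1 f2 G :
  cminor k (F ++ f1 :: f2 :: G) * cminor k.+1 (F ++ G)
  = cminor k.+1 (F ++ f2 :: G) * cminor k (F ++ f1 :: G)
    - cminor k (F ++ f2 :: G) * cminor k.+1 (F ++ f1 :: G).
Proof.
rewrite /cminor !size_cat /= !addnS; set n := (size F + size G)%N.
rewrite -[iota k n.+2]/(k :: iota k.+1 n.+1) -[iota k n.+1]/(k :: iota k.+1 n).
by rewrite !iota_rcons minor_jacobi_split // size_iota.
Qed.

Lemma cminor_pluecker k f1 f2 f3 f4 rs :
  cminor k (f1 :: f2 :: rs) * cminor k (f3 :: f4 :: rs)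
  - cminor k (f1 :: f3 :: rs) * cminor k (f2 :: f4 :: rs)
  + cminor k (f1 :: f4 :: rs) * cminor k (f2 :: f3 :: rs) = 0.
Proof. by apply: minor_pluecker; rewrite size_iota. Qed.

End Minors.

Section UniversalCharacter.
Variables (R : comNzRingType) (p q : int -> R).
Hypotheses (p0 : p 0 = 1) (q0 : q 0 = 1).
Hypotheses (p_neg : forall k : int, k < 0 -> p k = 0) (q_neg : forall k : int, k < 0 -> q k = 0).
Implicit Types (A B : seq int) (s t : int).

Definition univ_det (lam mu : seq nat) : R :=
  let l' := size mu in
  \det (\matrix_(i < size lam + l', j < size lam + l')
    if (i < l')%N then q ((nth 0%N mu (l' - 1 - i))%:Z + i%:Z - j%:Z)
    else p ((nth 0%N lam (i - l'))%:Z - i%:Z + j%:Z)).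

Definition yrow (a : int) : nat -> R := fun c => q (a - c%:Z).
Definition xrow (b : int) : nat -> R := fun c => p (b + c%:Z).
Definition rows (A B : seq int) := map yrow A ++ map xrow B.

Definition yoffsets (mu : seq nat) : seq int :=
  [seq (nth 0%N mu (size mu - 1 - i))%:Z + i%:Z | i <- iota 0 (size mu)].
Definition xoffsets (lam : seq nat) (l' : nat) : seq int :=
  [seq (nth 0%N lam i)%:Z - (l' + i)%:Z | i <- iota 0 (size lam)].

Lemma nth_rows A B i : nth (fun=> 0) (rows A B) i =
  if (i < size A)%N then yrow (nth 0 A i)
  else if (i < size A + size B)%N then xrow (nth 0 B (i - size A)) else fun=> 0.
Proof.
rewrite /rows nth_cat size_map; case: ltnP => leAi; first by rewrite (nth_map 0).
case: ltnP => ltiAB; first by rewrite (nth_map 0) // ltn_subLR.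
by rewrite nth_default // size_map leq_subRL.
Qed.

Lemma univ_det_rows lam mu :
  univ_det lam mu = cminor 0 (rows (yoffsets mu) (xoffsets lam (size mu))).
Proof.
rewrite /cminor /rows size_cat !size_map !size_iota addnC; symmetry.
apply: minorE; first by rewrite size_iota.
move=> i j; rewrite nth_iota // add0n -/(rows _ _) nth_rows.
have := ltn_ord i; have := ltn_ord j.
rewrite /yoffsets /xoffsets !size_map !size_iota => ltj lti.
case: (ltnP i (size mu)) => lei; first by rewrite (nth_map 0%N) ?size_iota // nth_iota.
rewrite ifT; last by lia.
rewrite (nth_map 0%N) ?size_iota; last by lia.
rewrite nth_iota; last by lia.
by rewrite /xrow !add0n; congr p; lia.
Qed.

Lemma rows_jacobi A (a b : int) B :
  cminor 0 (rows (rcons A a) (b :: B)) * cminor 1 (rows A B)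
  = cminor 1 (rows A (b :: B)) * cminor 0 (rows (rcons A a) B)
    - cminor 0 (rows A (b :: B)) * cminor 1 (rows (rcons A a) B).
Proof. by rewrite /rows map_rcons !cat_rcons cminor_jacobi. Qed.

Lemma rows_pluecker A (a1 a2 b1 b2 : int) B :
  cminor 0 (rows (rcons (rcons A a1) a2) B) * cminor 0 (rows A [:: b1, b2 & B])
  - cminor 0 (rows (rcons A a1) (b1 :: B)) * cminor 0 (rows (rcons A a2) (b2 :: B))
  + cminor 0 (rows (rcons A a1) (b2 :: B)) * cminor 0 (rows (rcons A a2) (b1 :: B)) = 0.
Proof.
rewrite /rows !map_rcons !cat_rcons /= !cminor_move_rows2.
exact: cminor_pluecker.
Qed.

Lemma cminor_rows_front k A B : cminor k (rows (k%:Z :: A) B) = cminor k.+1 (rows A B).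
Proof.
rewrite [rows _ _]/= cminor_cons_unit => [|c ltkc]; first by rewrite /yrow subrr q0 mul1r.
by rewrite /yrow q_neg //; lia.
Qed.

Lemma cminor_rows_back k A B (b : int) : b + (k + (size A + size B))%:Z = 0 ->
  cminor k (rows A (rcons B b)) = cminor k (rows A B).
Proof.
move=> bE; rewrite /rows map_rcons -rcons_cat cminor_rcons_unit => [|c].
  by rewrite size_cat !size_map /xrow bE p0 mul1r.
rewrite size_cat !size_map => ltc; rewrite /xrow p_neg //; lia.
Qed.

Lemma cminor_rows_shift k A B :
  cminor k (rows A B) = cminor 0 (rows [seq a - k%:Z | a : int <- A] [seq b + k%:Z | b : int <- B]).
Proof.
apply: cminor_eq => [|i c _ _]; first by rewrite /rows !size_cat !size_map.
rewrite !nth_rows !size_map; case: (ltnP i (size A)) => ltiA.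
  by rewrite (nth_map 0) // /yrow; congr q; lia.
case: ifP => //; rewrite -ltn_subLR // => ltiB.
by rewrite (nth_map 0) // /xrow; congr p; lia.
Qed.

Definition up2 n s : seq int := [seq s + (2 * i)%:Z | i <- iota 0 n].
Definition down2 m t : seq int := [seq t - (2 * i)%:Z | i <- iota 0 m].

Lemma size_up2 n s : size (up2 n s) = n. Proof. by rewrite size_map size_iota. Qed.
Lemma size_down2 m t : size (down2 m t) = m. Proof. by rewrite size_map size_iota. Qed.

Lemma up2S n s : up2 n.+1 s = s :: up2 n (s + 2).
Proof.
rewrite /up2 /= addr0; congr (_ :: _).
by rewrite -[1%N]/(1 + 0)%N iotaDl -map_comp; apply: eq_map => i /=; lia.
Qed.

Lemma up2Sr n s : up2 n.+1 s = rcons (up2 n s) (s + (2 * n)%:Z).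
Proof. by rewrite /up2 iota_rcons map_rcons. Qed.

Lemma down2S m t : down2 m.+1 t = t :: down2 m (t - 2).
Proof.
rewrite /down2 /= subr0; congr (_ :: _).
by rewrite -[1%N]/(1 + 0)%N iotaDl -map_comp; apply: eq_map => i /=; lia.
Qed.

Lemma down2Sr m t : down2 m.+1 t = rcons (down2 m t) (t - (2 * m)%:Z).
Proof. by rewrite /down2 iota_rcons map_rcons. Qed.

Lemma cminor_stair_col1 n m t :
  cminor 1 (rows (up2 n.+1 1) (down2 m t)) = cminor 0 (rows (up2 n 1) (down2 m (t + 2))).
Proof.
rewrite up2S cminor_rows_front cminor_rows_shift /up2 /down2 -!map_comp.
by congr (cminor 0 (rows _ _)); apply: eq_map => i /=; lia.
Qed.

Definition stair_det m n := cminor 0 (rows (up2 n 1) (down2 m (m%:Z - n%:Z))).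

Lemma stair_detE n m t : t = m%:Z - n%:Z ->
  cminor 0 (rows (up2 n 1) (down2 m t)) = stair_det m n.
Proof. by move->. Qed.

Lemma cminor_stair_drop n m t : t = m%:Z - n%:Z ->
  cminor 0 (rows (up2 n 1) (down2 m.+1 t)) = stair_det m n.
Proof.
move=> tE; rewrite down2Sr cminor_rows_back ?(stair_detE tE) //.
by rewrite size_up2 size_down2 tE; lia.
Qed.

Lemma size_stair n : size (stair n) = n.
Proof. by rewrite size_rev size_iota. Qed.

Lemma nth_stair n k : (k < n)%N -> nth 0%N (stair n) k = (n - k)%N.
Proof. by move=> ltkn; rewrite nth_rev ?size_iota // nth_iota; lia. Qed.

Lemma yoffsets_stair n : yoffsets (stair n) = up2 n 1.
Proof.
rewrite /yoffsets /up2 size_stair; apply/eq_in_map => i; rewrite mem_iota => /andP[_ lti].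
by rewrite nth_stair; lia.
Qed.

Lemma xoffsets_stair m n : xoffsets (stair m) n = down2 m (m%:Z - n%:Z).
Proof.
rewrite /xoffsets /down2 size_stair; apply/eq_in_map => i; rewrite mem_iota => /andP[_ lti].
by rewrite nth_stair; lia.
Qed.

Lemma univ_det_stair m n : univ_det (stair m) (stair n) = stair_det m n.
Proof. by rewrite univ_det_rows yoffsets_stair size_stair xoffsets_stair. Qed.

Lemma size_stair2 n : size (stair2 n.+1) = n.+1.
Proof. by rewrite /= size_stair. Qed.

Lemma yoffsets_stair2 n : yoffsets (stair2 n.+1) = rcons (up2 n 1) (1 + (2 * n.+1)%:Z).
Proof.
rewrite /yoffsets size_stair2 iota_rcons map_rcons subn1 /= subnn.
congr rcons; last by rewrite /stair2 /=; lia.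
apply/eq_in_map => i; rewrite mem_iota => /andP[_ lti].
rewrite (_ : (n - i = (n - i.+1).+1)%N) /=; last by lia.
by rewrite nth_stair; lia.
Qed.

Lemma xoffsets_stair2 m n :
  xoffsets (stair2 m.+1) n = (m.+1%:Z - n%:Z + 2) :: down2 m (m.+1%:Z - n%:Z - 2).
Proof.
rewrite /xoffsets /stair2 /= size_stair /down2; congr (_ :: _); first by lia.
rewrite -[1%N]/(1 + 0)%N iotaDl -map_comp; apply/eq_in_map => i; rewrite mem_iota => /andP[_ lti].
by rewrite /= nth_stair; lia.
Qed.

Lemma univ_det_stair_jacobi a b :
  univ_det (stair a.+2) (stair b.+2) * univ_det (stair a) (stair b)
  - univ_det (stair a.+2) (stair b) * univ_det (stair a) (stair b.+2)
  + univ_det (stair a.+1) (stair b.+1) ^+ 2 = 0.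
Proof.
rewrite !univ_det_stair.
pose t := a.+2%:Z - b.+2%:Z.
have := rows_jacobi (up2 b.+1 1) (1 + (2 * b.+1)%:Z) t (down2 a.+1 (t - 2)).
rewrite -up2Sr -down2S -/(stair_det a.+2 b.+2) !cminor_stair_col1.
rewrite (cminor_stair_drop (n := b) (m := a)); last by rewrite /t; lia.
rewrite (cminor_stair_drop (n := b.+1) (m := a.+1)); last by rewrite /t; lia.
rewrite (cminor_stair_drop (n := b.+2) (m := a)); last by rewrite /t; lia.
rewrite (stair_detE (n := b) (m := a.+2)); last by rewrite /t; lia.
rewrite (stair_detE (n := b.+1) (m := a.+1)); last by rewrite /t; lia.
by move=> ->; ring.
Qed.

Lemma univ_det_stair_pluecker a b :
  univ_det (stair a.+2) (stair b) * univ_det (stair a) (stair b.+2)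
  - univ_det (stair a.+1) (stair2 b.+1) * univ_det (stair2 a.+1) (stair b.+1)
  + univ_det (stair2 a.+1) (stair2 b.+1) * univ_det (stair a.+1) (stair b.+1) = 0.
Proof.
rewrite !univ_det_rows !size_stair !size_stair2 !yoffsets_stair !yoffsets_stair2.
rewrite !xoffsets_stair !xoffsets_stair2.
set t := a.+1%:Z - b.+1%:Z.
have -> : a.+2%:Z - b%:Z = t + 2 by rewrite /t; lia.
have -> : a%:Z - b.+2%:Z = t - 2 by rewrite /t; lia.
rewrite !up2Sr !down2S addrK.
rewrite -[RHS](rows_pluecker (up2 b 1) (1 + (2 * b)%:Z) (1 + (2 * b.+1)%:Z)
  (t + 2) t (down2 a (t - 2))).
ring.
Qed.

End UniversalCharacter.

Lemma schur_pz0 (R : fieldType) (x : nat -> R) : schur_pz x 0 = 1.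
Proof. by rewrite /= /schur_p big_nat1 expr0 invr1 mul1r coef1. Qed.

Lemma schur_pz_neg (R : fieldType) (x : nat -> R) (k : int) : k < 0 -> schur_pz x k = 0.
Proof. by case: k. Qed.

Lemma univ_charE (R : fieldType) (lam mu : seq nat) (x y : nat -> R) :
  univ_char lam mu x y = univ_det (schur_pz x) (schur_pz y) lam mu.
Proof. by []. Qed.

Theorem lemma4p7 (R : fieldType) (hchar : [pchar R] =i pred0)
    (x y : nat -> R) (u v : nat) (hu : (1 <= u)%N) (hv : (1 <= v)%N) :
  univ_char (stair u.+1) (stair v.+1) x y * univ_char (stair u.-1) (stair v.-1) x y
  - univ_char (stair u.+1) (stair v.-1) x y * univ_char (stair u.-1) (stair v.+1) x y
  + univ_char (stair u) (stair v) x y ^+ 2 = 0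
  /\
  univ_char (stair u.+1) (stair v.-1) x y * univ_char (stair u.-1) (stair v.+1) x y
  - univ_char (stair u) (stair2 v) x y * univ_char (stair2 u) (stair v) x y
  + univ_char (stair2 u) (stair2 v) x y * univ_char (stair u) (stair v) x y = 0.
Proof.
case: u hu => // a _; case: v hv => // b _.
rewrite -[a.+1.-1]/a -[b.+1.-1]/b !univ_charE.
have [p0 q0] := (schur_pz0 x, schur_pz0 y).
have [p_neg q_neg] := (@schur_pz_neg _ x, @schur_pz_neg _ y).
by split; [apply: univ_det_stair_jacobi | apply: univ_det_stair_pluecker].
Qed.
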